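(* Let $m\ge1$, $n\ge1$ and let $\Sigma_0,\Sigma_1,\dots,\Sigma_n\in\mathbb R^{m\times m}$ be such that the block-Toeplitz matrix $\mathbf T_n$, whose $(i,j)$ block ($i,j=0,\dots,n$) is $\Sigma_{i-j}$ if $i\ge j$ and $\Sigma_{j-i}^\top$ if $i<j$, satisfies $\mathbf T_n=\mathbf T_n^\top>0$. Then there exists $\bar N$ such that for every $N\ge\bar N$ the matrix $\mathbf T_n$ can be extended to an $N\times N$ block ($mN\times mN$) block-circulant, symmetric, positive definite matrix $\boldsymbol\Sigma_N$, i.e. one whose upper-left $(n+1)\times(n+1)$ block corner equals $\mathbf T_n$.
   Context: A matrix made of $N\times N$ blocks of size $m\times m$ is block-circulant if its $(i,j)$ block depends only on $(i-j)\bmod N$. *)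

From HB Require Import structures.
From mathcomp Require Import all_boot all_order all_algebra.
From mathcomp Require Export reals.
Set Implicit Arguments. Unset Strict Implicit. Unset Printing Implicit Defensive.
Import Order.TTheory GRing.Theory Num.Theory.
Local Open Scope ring_scope.

Definition posdef (R : realType) (s : nat) (A : 'M[R]_s) : Prop :=
  forall x : 'rV[R]_s, x != 0 -> 0 < (x *m A *m x^T) 0 0.

Definition toep_block (R : realType) (m n : nat) (Sigma : 'I_n.+1 -> 'M[R]_m)
    (i j : nat) : 'M[R]_m :=
  if (j <= i)%N then Sigma (inord (i - j)) else (Sigma (inord (j - i)))^T.

Definition toeplitzT (R : realType) (m n : nat) (Sigma : 'I_n.+1 -> 'M[R]_m) :=
  \mxblock_(i < n.+1, j < n.+1) toep_block Sigma i j :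
    'M[R]_(\sum_(i < n.+1) m, \sum_(j < n.+1) m).

Definition block_circulant (R : realType) (m N : nat)
    (S : 'M[R]_(\sum_(i < N) m, \sum_(j < N) m)) : Prop :=
  forall i j i' j' : 'I_N,
    ((i + N - j) %% N = (i' + N - j') %% N)%N ->
    submxblock S i j = submxblock S i' j'.

From HB Require Import structures.
From mathcomp Require Import all_boot all_order all_algebra.
From mathcomp Require Import reals.
From mathcomp Require Import ring lra.
Set Implicit Arguments. Unset Strict Implicit. Unset Printing Implicit Defensive.
Import Order.TTheory GRing.Theory Num.Theory.
Local Open Scope ring_scope.

(* Reweight the lags, Sigma_d |-> K / (K - d) Sigma_d.  For K large this is a
   small relative perturbation and positive definiteness is an open condition, so
   the reweighted block-Toeplitz matrix of order n + 1 stays positive definite.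
   Extend it lag by lag to a positive definite block-Toeplitz matrix of order K,
   each new lag being the central solution of the Schur-complement condition.
   Finally average this K x K block matrix over its N cyclic placements inside an
   N x N block matrix: the average is block-circulant, symmetric and positive
   definite, and its lag-d block is (K - d) / K times the extended lag d, which
   for d <= n is Sigma_d again. *)

Section BilinearForms.
Variable R : realFieldType.

Definition mxform p q (u : 'rV[R]_p) (A : 'M[R]_(p, q)) (v : 'rV[R]_q) : R :=
  (u *m A *m v^T) 0 0.

Lemma mxformDl p q (u1 u2 : 'rV[R]_p) A (v : 'rV[R]_q) :
  mxform (u1 + u2) A v = mxform u1 A v + mxform u2 A v.
Proof. by rewrite /mxform !mulmxDl mxE. Qed.

Lemma mxformDr p q (u : 'rV[R]_p) A (v1 v2 : 'rV[R]_q) :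
  mxform u A (v1 + v2) = mxform u A v1 + mxform u A v2.
Proof. by rewrite /mxform linearD /= mulmxDr mxE. Qed.

Lemma mxformB p q (u : 'rV[R]_p) A B (v : 'rV[R]_q) :
  mxform u (A - B) v = mxform u A v - mxform u B v.
Proof. by rewrite /mxform mulmxBr mulmxBl !mxE. Qed.

Lemma mxformZl p q c (u : 'rV[R]_p) A (v : 'rV[R]_q) :
  mxform (c *: u) A v = c * mxform u A v.
Proof. by rewrite /mxform -!scalemxAl mxE. Qed.

Lemma mxformZr p q c (u : 'rV[R]_p) A (v : 'rV[R]_q) :
  mxform u A (c *: v) = c * mxform u A v.
Proof. by rewrite /mxform linearZ /= -scalemxAr mxE. Qed.

Lemma mxformZ p q c (u : 'rV[R]_p) A (v : 'rV[R]_q) :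
  mxform u (c *: A) v = c * mxform u A v.
Proof. by rewrite /mxform -scalemxAr -scalemxAl mxE. Qed.

Lemma mxformNl p q (u : 'rV[R]_p) A (v : 'rV[R]_q) :
  mxform (- u) A v = - mxform u A v.
Proof. by rewrite -scaleN1r mxformZl mulN1r. Qed.

Lemma mxformNr p q (u : 'rV[R]_p) A (v : 'rV[R]_q) :
  mxform u A (- v) = - mxform u A v.
Proof. by rewrite -scaleN1r mxformZr mulN1r. Qed.

Lemma mxform0l p q A (v : 'rV[R]_q) : mxform (0 : 'rV[R]_p) A v = 0.
Proof. by rewrite /mxform !mul0mx mxE. Qed.

Lemma mxform0 p q (u : 'rV[R]_p) (v : 'rV[R]_q) : mxform u 0 v = 0.
Proof. by rewrite /mxform mulmx0 mul0mx mxE. Qed.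

Lemma mxform_sum p q (u : 'rV[R]_p) (v : 'rV[R]_q) (I : Type) (r : seq I)
    (P : pred I) (A : I -> 'M[R]_(p, q)) :
  mxform u (\sum_(k <- r | P k) A k) v = \sum_(k <- r | P k) mxform u (A k) v.
Proof. by rewrite /mxform mulmx_sumr mulmx_suml summxE. Qed.

Lemma mxform_mull p p' q (u : 'rV[R]_p) (P : 'M_(p, p')) A (v : 'rV[R]_q) :
  mxform (u *m P) A v = mxform u (P *m A) v.
Proof. by rewrite /mxform !mulmxA. Qed.

Lemma mxform_mulr p q q' (u : 'rV[R]_p) A (v : 'rV[R]_q') (Q : 'M_(q', q)) :
  mxform u A (v *m Q) = mxform u (A *m Q^T) v.
Proof. by rewrite /mxform trmx_mul !mulmxA. Qed.

Lemma mxformC p q (u : 'rV[R]_p) A (v : 'rV[R]_q) : mxform u A v = mxform v A^T u.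
Proof.
rewrite /mxform; transitivity ((u *m A *m v^T)^T 0 0); first by rewrite [RHS]mxE.
by rewrite !trmx_mul trmxK mulmxA.
Qed.

Lemma posdef_unitmx p (M : 'M[R]_p) :
  (forall v, v != 0 -> 0 < mxform v M v) -> M \in unitmx.
Proof.
move=> pdM; rewrite unitmxE unitfE; apply/negP => /det0P [v v0 vM].
by have := pdM v v0; rewrite /mxform vM mul0mx mxE ltxx.
Qed.

Section SchurComplement.
Variables (m p : nat) (M : 'M[R]_p).
Hypotheses (MT : M^T = M) (Mu : M \in unitmx).

Lemma tr_invmx_sym : (invmx M)^T = invmx M.
Proof. by rewrite trmx_inv MT. Qed.

Lemma schur_compl_posdef (A0 : 'M[R]_m) (a : 'M[R]_(m, p)) :
  (forall u v, (u != 0) || (v != 0) ->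
     0 < mxform u A0 u + 2 * mxform u a v + mxform v M v) ->
  forall u, u != 0 -> 0 < mxform u (A0 - a *m invmx M *m a^T) u.
Proof.
move=> pd u u0; set Mi := invmx M.
have MiT : Mi^T = Mi by exact: tr_invmx_sym.
have MiM : Mi *m M = 1%:M by rewrite /Mi mulVmx.
have <- : mxform u A0 u + 2 * mxform u a (- (u *m (a *m Mi)))
      + mxform (- (u *m (a *m Mi))) M (- (u *m (a *m Mi)))
    = mxform u (A0 - a *m Mi *m a^T) u.
  rewrite ?mxformNl ?mxformNr ?opprK mxform_mull !mxform_mulr trmx_mul.
  by rewrite MiT !mulmxA -(mulmxA a Mi M) MiM mulmx1 mxformB; ring.
by apply: pd; rewrite u0.
Qed.

Lemma mxform_schur_expand (A0 D0 : 'M[R]_m) (a : 'M[R]_(m, p)) (b : 'M[R]_(p, m))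
    u w z :
  mxform u A0 u + 2 * mxform u a w + mxform w M w + 2 * mxform w b z
      + 2 * mxform u (a *m invmx M *m b) z + mxform z D0 z
  = mxform (w + u *m (a *m invmx M) + z *m (b^T *m invmx M)) M
           (w + u *m (a *m invmx M) + z *m (b^T *m invmx M))
    + mxform u (A0 - a *m invmx M *m a^T) u
    + mxform z (D0 - b^T *m invmx M *m b) z.
Proof.
set Mi := invmx M.
have MiT : Mi^T = Mi by exact: tr_invmx_sym.
have MMi : M *m Mi = 1%:M by rewrite /Mi mulmxV.
have MiM : Mi *m M = 1%:M by rewrite /Mi mulVmx.
rewrite !mxformDl !mxformDr !mxformB.
have -> : mxform w M (u *m (a *m Mi)) = mxform u a w.
  by rewrite mxform_mulr trmx_mul MiT mulmxA MMi mul1mx mxformC trmxK.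
have -> : mxform (u *m (a *m Mi)) M w = mxform u a w.
  by rewrite mxform_mull -mulmxA MiM mulmx1.
have -> : mxform w M (z *m (b^T *m Mi)) = mxform w b z.
  by rewrite mxform_mulr trmx_mul MiT trmxK mulmxA MMi mul1mx.
have -> : mxform (z *m (b^T *m Mi)) M w = mxform w b z.
  by rewrite mxform_mull -mulmxA MiM mulmx1 mxformC trmxK.
have -> : mxform (u *m (a *m Mi)) M (u *m (a *m Mi)) = mxform u (a *m Mi *m a^T) u.
  by rewrite mxform_mull mxform_mulr trmx_mul MiT -!mulmxA (mulmxA M) MMi mul1mx.
have -> : mxform (z *m (b^T *m Mi)) M (z *m (b^T *m Mi))
    = mxform z (b^T *m Mi *m b) z.
  by rewrite mxform_mull mxform_mulr trmx_mul MiT trmxK -!mulmxA (mulmxA M) MMi mul1mx.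
have -> : mxform (u *m (a *m Mi)) M (z *m (b^T *m Mi)) = mxform u (a *m Mi *m b) z.
  by rewrite mxform_mull mxform_mulr trmx_mul MiT trmxK -!mulmxA (mulmxA M) MMi mul1mx.
have -> : mxform (z *m (b^T *m Mi)) M (u *m (a *m Mi)) = mxform u (a *m Mi *m b) z.
  rewrite mxform_mull mxform_mulr trmx_mul MiT -!mulmxA (mulmxA M) MMi mul1mx mxformC.
  by rewrite !trmx_mul trmxK MiT trmxK mulmxA.
ring.
Qed.

(* The corner [a M^-1 b] is the central completion: it turns the form into a
   square in the middle variable plus the two Schur complements of [M], which the
   hypotheses on the two principal corners make positive definite. *)
Lemma schur_extension_posdef (A0 D0 : 'M[R]_m) (a : 'M[R]_(m, p))
    (b : 'M[R]_(p, m)) :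
  (forall u v, (u != 0) || (v != 0) ->
     0 < mxform u A0 u + 2 * mxform u a v + mxform v M v) ->
  (forall v z, (v != 0) || (z != 0) ->
     0 < mxform v M v + 2 * mxform v b z + mxform z D0 z) ->
  forall u w z, [|| u != 0, w != 0 | z != 0] ->
  0 < mxform u A0 u + 2 * mxform u a w + mxform w M w + 2 * mxform w b z
      + 2 * mxform u (a *m invmx M *m b) z + mxform z D0 z.
Proof.
move=> pd1 pd2 u w z nz.
have pdM t : t != 0 -> 0 < mxform t M t.
  by move=> t0; have := pd1 0 t; rewrite t0 orbT !mxform0l mulr0 !add0r; apply.
have pd2' z' v : (z' != 0) || (v != 0) ->
    0 < mxform z' D0 z' + 2 * mxform z' b^T v + mxform v M v.
  move=> nz'; rewrite [mxform z' b^T v]mxformC trmxK.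
  by have := pd2 v z'; rewrite orbC nz' => /(_ isT); lra.
have compl_ge0 s (A : 'M[R]_s) (y : 'rV[R]_s) :
    (forall y, y != 0 -> 0 < mxform y A y) -> 0 <= mxform y A y.
  move=> pdA; have [->|y0] := eqVneq y 0; first by rewrite mxform0l.
  exact/ltW/pdA.
have S1 := schur_compl_posdef pd1; have S2 := schur_compl_posdef pd2'.
rewrite trmxK in S2.
rewrite mxform_schur_expand; set t := w + _ + _.
have Ht := compl_ge0 _ _ t pdM.
have Hu := compl_ge0 _ _ u S1; have Hz := compl_ge0 _ _ z S2.
have [t0|tpos] := eqVneq t 0; last by have := pdM t tpos; lra.
have [u0|uz] := eqVneq u 0; last by have := S1 u uz; lra.
have [z0|zz] := eqVneq z 0; last by have := S2 z zz; lra.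
move: t0 nz; rewrite /t u0 z0 !mul0mx !addr0 => ->; by rewrite !eqxx.
Qed.

End SchurComplement.

Section BlockForms.
Variable m : nat.
Implicit Types (F : nat -> nat -> 'M[R]_m) (f : nat -> 'rV[R]_m).

Definition blockform F k f : R :=
  \sum_(0 <= i < k) \sum_(0 <= j < k) mxform (f i) (F i j) (f j).

Definition blockform_posdef F k :=
  forall f, (exists2 i, (i < k)%N & f i != 0) -> 0 < blockform F k f.

Definition block_sym F := forall i j, F j i = (F i j)^T.

Definition rowblock k (x : 'rV[R]_(\sum_(i < k) m)) (i : nat) : 'rV[R]_m :=
  if @insub nat (fun i => (i < k)%N) 'I_k i is Some o then submxrow x o else 0.

Lemma rowblockE k (x : 'rV[R]_(\sum_(i < k) m)) (o : 'I_k) :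
  rowblock x o = submxrow x o.
Proof. by rewrite /rowblock valK. Qed.

Lemma mxrow_rowblock k (x : 'rV[R]_(\sum_(i < k) m)) : \mxrow_(j < k) rowblock x j = x.
Proof. by rewrite -{2}(submxrowK x); apply: eq_mxrow => j; exact: rowblockE. Qed.

Lemma rowblock_neq0 k (x : 'rV[R]_(\sum_(i < k) m)) :
  x != 0 -> exists2 i, (i < k)%N & rowblock x i != 0.
Proof.
move=> x0; case: (pickP (fun i : 'I_k => submxrow x i != 0)) => [i xi | x_0].
  by exists i => //; rewrite rowblockE.
move: x0; rewrite -(submxrowK x).
have -> : \mxrow_j submxrow x j = \mxrow_j (0 : 'rV[R]_m).
  by apply: eq_mxrow => j; have := x_0 j; move/negbFE/eqP.
by rewrite mxrow0 eqxx.
Qed.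

Lemma mxrow_neq0 k f i : (i < k)%N -> f i != 0 -> \mxrow_(j < k) f j != 0.
Proof.
move=> ik fi; apply/negP => /eqP f0; move: fi.
have := mxrowK (fun j : 'I_k => f j) (Ordinal ik).
by rewrite f0 submxrow0 /= => <-; rewrite eqxx.
Qed.

Lemma mxform_mxrow_mxblock k (f g : 'I_k -> 'rV[R]_m) (F : 'I_k -> 'I_k -> 'M[R]_m) :
  mxform (\mxrow_i f i) (\mxblock_(i, j) F i j) (\mxrow_j g j) =
  \sum_i \sum_j mxform (f i) (F i j) (g j).
Proof.
rewrite /mxform mul_mxrow_mxblock tr_mxrow mul_mxrow_mxcol summxE exchange_big.
by apply: eq_bigr => j _; rewrite mulmx_suml summxE.
Qed.

Lemma blockform_mxrow F k f :
  blockform F k f = mxform (\mxrow_(i < k) f i) (\mxblock_(i < k, j < k) F i j)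
                           (\mxrow_(j < k) f j).
Proof.
rewrite mxform_mxrow_mxblock /blockform big_mkord.
by apply: eq_bigr => i _; rewrite big_mkord.
Qed.

Lemma mxform_mxblock k (x : 'rV[R]_(\sum_(i < k) m)) F :
  mxform x (\mxblock_(i < k, j < k) F i j) x = blockform F k (rowblock x).
Proof. by rewrite blockform_mxrow mxrow_rowblock. Qed.

Lemma mxblock_posdefP F k :
  (forall x, x != 0 -> 0 < mxform x (\mxblock_(i < k, j < k) F i j) x)
  <-> blockform_posdef F k.
Proof.
split=> [pd f [i ik fi] | pd x x0].
  by rewrite blockform_mxrow; apply: pd; exact: mxrow_neq0 ik fi.
by rewrite mxform_mxblock; apply: pd; exact: rowblock_neq0 x0.
Qed.

Lemma eq_blockform F k f g :
  (forall i, (i < k)%N -> f i = g i) -> blockform F k f = blockform F k g.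
Proof.
move=> fg; apply: eq_big_nat => i /andP[_ ik].
by apply: eq_big_nat => j /andP[_ jk]; rewrite !fg.
Qed.

Lemma blockform_ge0 F k f : blockform_posdef F k -> 0 <= blockform F k f.
Proof.
move=> pd; case: (pickP (fun i : 'I_k => f i != 0)) => [i fi | f0].
  by apply/ltW/pd; exists i.
rewrite (@eq_blockform _ _ f (fun _ => 0)); last first.
  by move=> i ik; have := f0 (Ordinal ik); move/negbFE/eqP.
by rewrite /blockform big1_seq // => i _; rewrite big1_seq // => j _; exact: mxform0l.
Qed.

Lemma blockform_recl F k f :
  blockform F k.+1 f = mxform (f 0) (F 0 0) (f 0)
   + \sum_(0 <= j < k) mxform (f 0) (F 0 j.+1) (f j.+1)
   + \sum_(0 <= i < k) mxform (f i.+1) (F i.+1 0) (f 0)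
   + blockform (fun i j => F i.+1 j.+1) k (fun i => f i.+1).
Proof.
rewrite /blockform big_nat_recl //.
under eq_bigr do rewrite big_nat_recl //.
rewrite big_split /= big_nat_recl //; ring.
Qed.

Lemma blockform_recr F k f :
  blockform F k.+1 f = blockform F k f
   + \sum_(0 <= i < k) mxform (f i) (F i k) (f k)
   + \sum_(0 <= j < k) mxform (f k) (F k j) (f j)
   + mxform (f k) (F k k) (f k).
Proof.
rewrite /blockform big_nat_recr //= big_nat_recr //=.
under eq_bigr do rewrite big_nat_recr //=.
rewrite big_split /=; ring.
Qed.

Lemma sum_mxform_mxrow (u : 'rV[R]_m) (A : nat -> 'M[R]_m) f k :
  \sum_(0 <= j < k) mxform u (A j) (f j) =
  mxform u (\mxrow_(j < k) A j) (\mxrow_(j < k) f j).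
Proof.
by rewrite /mxform tr_mxrow mul_mxrow mul_mxrow_mxcol summxE big_mkord.
Qed.

Lemma sum_mxform_mxcol f (B : nat -> 'M[R]_m) (z : 'rV[R]_m) k :
  \sum_(0 <= i < k) mxform (f i) (B i) z =
  mxform (\mxrow_(i < k) f i) (\mxcol_(i < k) B i) z.
Proof. by rewrite /mxform mul_mxrow_mxcol mulmx_suml summxE big_mkord. Qed.

Lemma blockform_split3 F k f : block_sym F ->
  blockform F k.+2 f = mxform (f 0) (F 0 0) (f 0)
    + 2 * mxform (f 0) (\mxrow_(j < k) F 0 j.+1) (\mxrow_(j < k) f j.+1)
    + mxform (\mxrow_(j < k) f j.+1) (\mxblock_(i < k, j < k) F i.+1 j.+1)
             (\mxrow_(j < k) f j.+1)
    + 2 * mxform (\mxrow_(j < k) f j.+1) (\mxcol_(i < k) F i.+1 k.+1) (f k.+1)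
    + 2 * mxform (f 0) (F 0 k.+1) (f k.+1)
    + mxform (f k.+1) (F k.+1 k.+1) (f k.+1).
Proof.
move=> sF; rewrite blockform_recl blockform_recr big_nat_recr //= big_nat_recr //=.
rewrite blockform_mxrow /=.
have E1 : \sum_(0 <= i < k) mxform (f i.+1) (F i.+1 0) (f 0) =
          \sum_(0 <= j < k) mxform (f 0) (F 0 j.+1) (f j.+1).
  by apply: eq_bigr => i _; rewrite mxformC -sF.
have E2 : \sum_(0 <= j < k) mxform (f k.+1) (F k.+1 j.+1) (f j.+1) =
          \sum_(0 <= i < k) mxform (f i.+1) (F i.+1 k.+1) (f k.+1).
  by apply: eq_bigr => i _; rewrite mxformC -sF.
have E3 : mxform (f k.+1) (F k.+1 0) (f 0) = mxform (f 0) (F 0 k.+1) (f k.+1).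
  by rewrite mxformC -sF.
rewrite E1 E2 E3 sum_mxform_mxrow sum_mxform_mxcol; ring.
Qed.

Lemma blockform_posdef_head F k : block_sym F -> blockform_posdef F k.+1 ->
  forall u v, (u != 0) || (v != 0) ->
  0 < mxform u (F 0 0) u + 2 * mxform u (\mxrow_(j < k) F 0 j.+1) v
      + mxform v (\mxblock_(i < k, j < k) F i.+1 j.+1) v.
Proof.
move=> sF pd u v nz.
pose f i := if i is i'.+1 then rowblock v i' else u.
have ex : exists2 i, (i < k.+1)%N & f i != 0.
  case/orP: nz => [u0|v0]; first by exists 0%N.
  by have [i ik vi] := rowblock_neq0 v0; exists i.+1.
have f0 : f 0 = u by [].
have fv : \mxrow_(j < k) f j.+1 = v by rewrite -[RHS]mxrow_rowblock.
have E1 : \sum_(0 <= j < k) mxform (f 0) (F 0 j.+1) (f j.+1)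
          = mxform u (\mxrow_(j < k) F 0 j.+1) v.
  by rewrite sum_mxform_mxrow fv.
have E2 : \sum_(0 <= i < k) mxform (f i.+1) (F i.+1 0) (f 0)
          = mxform u (\mxrow_(j < k) F 0 j.+1) v.
  by rewrite -E1; apply: eq_bigr => i _; rewrite mxformC -sF.
have E3 : blockform (fun i j => F i.+1 j.+1) k (fun i => f i.+1)
          = mxform v (\mxblock_(i < k, j < k) F i.+1 j.+1) v.
  by rewrite blockform_mxrow fv.
by have := pd f ex; rewrite blockform_recl E1 E2 E3 f0; lra.
Qed.

Lemma blockform_posdef_tail F k : block_sym F -> blockform_posdef F k.+1 ->
  forall v z, (v != 0) || (z != 0) ->
  0 < mxform v (\mxblock_(i < k, j < k) F i j) v
      + 2 * mxform v (\mxcol_(i < k) F i k) z + mxform z (F k k) z.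
Proof.
move=> sF pd v z nz.
pose f i := if (i < k)%N then rowblock v i else z.
have ex : exists2 i, (i < k.+1)%N & f i != 0.
  case/orP: nz => [v0|z0]; last by exists k => //; rewrite /f ltnn.
  have [i ik vi] := rowblock_neq0 v0; exists i; first exact: ltnW.
  by rewrite /f ik.
have fk : f k = z by rewrite /f ltnn.
have fv : \mxrow_(i < k) f i = v.
  by rewrite -[RHS]mxrow_rowblock; apply: eq_mxrow => i; rewrite /f ltn_ord.
have E1 : \sum_(0 <= i < k) mxform (f i) (F i k) z = mxform v (\mxcol_(i < k) F i k) z.
  by rewrite sum_mxform_mxcol fv.
have E2 : \sum_(0 <= j < k) mxform z (F k j) (f j) = mxform v (\mxcol_(i < k) F i k) z.
  by rewrite -E1; apply: eq_bigr => i _; rewrite mxformC -sF.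
have E3 : blockform F k f = mxform v (\mxblock_(i < k, j < k) F i j) v.
  by rewrite blockform_mxrow fv.
by have := pd f ex; rewrite blockform_recr fk E1 E2 E3; lra.
Qed.

End BlockForms.

Section BlockToeplitz.
Variable m : nat.
Implicit Types (Ga : nat -> 'M[R]_m).

Definition toep Ga i j : 'M[R]_m :=
  if (j <= i)%N then Ga (i - j)%N else (Ga (j - i)%N)^T.

Definition lag i j : nat := if (j <= i)%N then (i - j)%N else (j - i)%N.

Lemma lag_le i j k : (i <= k)%N -> (j <= k)%N -> (lag i j <= k)%N.
Proof. by rewrite /lag; case: ifP => _ ik jk; apply: leq_trans (leq_subr _ _) _. Qed.

Lemma lag_lt i j k : (i < k)%N -> (j < k)%N -> (lag i j < k)%N.
Proof. by rewrite /lag; case: ifP => _ ik jk; apply: leq_ltn_trans (leq_subr _ _) _. Qed.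

Lemma lagSS i j : lag i.+1 j.+1 = lag i j.
Proof. by rewrite /lag ltnS !subSS. Qed.

Lemma toep_sym Ga : (Ga 0)^T = Ga 0 -> block_sym (toep Ga).
Proof.
move=> sym0 i j; rewrite /toep; case: (ltngtP i j) => [ij|ij|->].
- by rewrite trmxK.
- by [].
- by rewrite subnn sym0.
Qed.

Lemma toepSS Ga i j : toep Ga i.+1 j.+1 = toep Ga i j.
Proof. by rewrite /toep ltnS !subSS. Qed.

Lemma toepii Ga i : toep Ga i i = Ga 0.
Proof. by rewrite /toep leqnn subnn. Qed.

Lemma eq_toep Ga Gb i j : Gb (lag i j) = Ga (lag i j) -> toep Gb i j = toep Ga i j.
Proof. by rewrite /toep /lag; case: ifP => _ ->. Qed.

Lemma toepZ Ga (w : nat -> R) i j :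
  toep (fun d => w d *: Ga d) i j = w (lag i j) *: toep Ga i j.
Proof. by rewrite /toep /lag; case: ifP => _ //; rewrite linearZ. Qed.

Lemma toep_extend_step Ga k : (Ga 0)^T = Ga 0 -> blockform_posdef (toep Ga) k.+1 ->
  exists Gb, (forall d, (d <= k)%N -> Gb d = Ga d) /\ blockform_posdef (toep Gb) k.+2.
Proof.
move=> sym0 pd; have sF := toep_sym sym0.
pose M := \mxblock_(i < k, j < k) toep Ga i.+1 j.+1.
pose a := \mxrow_(j < k) toep Ga 0 j.+1.
pose b := \mxcol_(i < k) toep Ga i.+1 k.+1.
have pd1 := blockform_posdef_head sF pd; rewrite toepii -/M -/a in pd1.
have pd2 := blockform_posdef_tail sF pd; rewrite toepii in pd2.
have eM : \mxblock_(i < k, j < k) toep Ga i j = M.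
  by apply: eq_mxblock => i j; rewrite toepSS.
have eb : \mxcol_(i < k) toep Ga i k = b by apply: eq_mxcol => i; rewrite toepSS.
rewrite eM eb in pd2.
have MT : M^T = M by rewrite tr_mxblock; apply: eq_mxblock => i j; rewrite -sF.
have Mu : M \in unitmx.
  apply: posdef_unitmx => v v0.
  by have := pd1 0 v; rewrite v0 orbT !mxform0l mulr0 !add0r; apply.
pose X := a *m invmx M *m b.
pose Gb d := if d == k.+1 then X^T else Ga d.
have agree d : (d <= k)%N -> Gb d = Ga d.
  by rewrite /Gb; case: eqP => // ->; rewrite ltnn.
have agree_toep i j : (lag i j <= k)%N -> toep Gb i j = toep Ga i j.
  by move=> ijk; apply/eq_toep/agree.
exists Gb; split => // f [i ik fi].
have Gb0 : Gb 0 = Ga 0 by [].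
rewrite blockform_split3; last by apply: toep_sym; rewrite Gb0.
rewrite !toepii Gb0.
have -> : toep Gb 0 k.+1 = X by rewrite /toep /Gb /= subn0 eqxx trmxK.
have -> : \mxrow_(j < k) toep Gb 0 j.+1 = a.
  apply: eq_mxrow => j; apply: agree_toep; exact: lag_le (leq0n k) (ltn_ord j).
have -> : \mxblock_(i < k, j < k) toep Gb i.+1 j.+1 = M.
  apply: eq_mxblock => i' j; apply: agree_toep; rewrite lagSS.
  exact: lag_le (ltnW (ltn_ord i')) (ltnW (ltn_ord j)).
have -> : \mxcol_(i < k) toep Gb i.+1 k.+1 = b.
  apply: eq_mxcol => i'; apply: agree_toep; rewrite lagSS.
  exact: lag_le (ltnW (ltn_ord i')) (leqnn k).
apply: (schur_extension_posdef MT Mu pd1 pd2).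
case: i ik fi => [|i] ik fi; first by rewrite fi.
case: (ltngtP i k) => [ilt|igt|eik]; last by rewrite -eik fi !orbT.
  by rewrite (@mxrow_neq0 _ _ (fun j => f j.+1) i ilt fi) orbT.
by move: ik; rewrite !ltnS leqNgt igt.
Qed.

Lemma toep_extend Ga n : (Ga 0)^T = Ga 0 -> blockform_posdef (toep Ga) n.+1 ->
  forall k, (n <= k)%N ->
  exists Gb, (forall d, (d <= n)%N -> Gb d = Ga d) /\ blockform_posdef (toep Gb) k.+1.
Proof.
move=> sym0 pd; elim=> [|k IH] nk.
  by exists Ga; move: nk; rewrite leqn0 => /eqP E; subst n.
case: (leqP n k) => [nk' | kn].
  have [Gc [agc pdc]] := IH nk'.
  have sc : (Gc 0)^T = Gc 0 by rewrite agc.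
  have [Gb [agb pdb]] := toep_extend_step sc pdc.
  by exists Gb; split => // d dn; rewrite agb ?agc // (leq_trans dn nk').
have -> : k.+1 = n by apply/eqP; rewrite eqn_leq nk kn.
by exists Ga.
Qed.

End BlockToeplitz.

Definition sqnorm s (x : 'rV[R]_s) : R := mxform x 1%:M x.

Lemma sqnormE s (x : 'rV[R]_s) : sqnorm x = \sum_a x 0 a ^+ 2.
Proof. by rewrite /sqnorm /mxform mulmx1 mxE; apply: eq_bigr => a _; rewrite !mxE expr2. Qed.

Lemma sqnorm_ge0 s (x : 'rV[R]_s) : 0 <= sqnorm x.
Proof. by rewrite sqnormE; apply: sumr_ge0 => a _; rewrite sqr_ge0. Qed.

Lemma sqr_coord_le_sqnorm s (x : 'rV[R]_s) a : x 0 a ^+ 2 <= sqnorm x.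
Proof.
by rewrite sqnormE (bigD1 a) //= lerDl; apply: sumr_ge0 => b _; exact: sqr_ge0.
Qed.

Lemma sqnorm_gt0 s (x : 'rV[R]_s) : x != 0 -> 0 < sqnorm x.
Proof.
move=> x0; have [a xa] : exists a, x 0 a != 0.
  apply/existsP; apply: contraR x0 => /existsPn x_0; apply/eqP/matrixP => i j.
  by rewrite ord1 mxE; apply/eqP/negbNE/x_0.
apply: lt_le_trans (sqr_coord_le_sqnorm x a).
by rewrite lt_def sqr_ge0 andbT sqrf_eq0.
Qed.

Lemma sqnorm_mxrow m k (f : nat -> 'rV[R]_m) :
  sqnorm (\mxrow_(i < k) f i) = \sum_(0 <= i < k) sqnorm (f i).
Proof.
rewrite /sqnorm /mxform mulmx1 tr_mxrow mul_mxrow_mxcol summxE big_mkord.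
by apply: eq_bigr => i _; rewrite mulmx1.
Qed.

Definition mxabs p q (A : 'M[R]_(p, q)) : R := \sum_a \sum_b `|A a b|.

Lemma mxabs_ge0 p q (A : 'M[R]_(p, q)) : 0 <= mxabs A.
Proof. by apply: sumr_ge0 => a _; apply: sumr_ge0. Qed.

Lemma mxabsZ p q c (A : 'M[R]_(p, q)) : mxabs (c *: A) = `|c| * mxabs A.
Proof.
rewrite /mxabs mulr_sumr; apply: eq_bigr => a _; rewrite mulr_sumr.
by apply: eq_bigr => b _; rewrite mxE normrM.
Qed.

Lemma norm_mxform_le p q (u : 'rV[R]_p) A (v : 'rV[R]_q) :
  `|mxform u A v| <= mxabs A * (sqnorm u + sqnorm v).
Proof.
have -> : mxform u A v = \sum_b \sum_a u 0 a * A a b * v 0 b.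
  by rewrite /mxform mxE; apply: eq_bigr => b _; rewrite !mxE big_distrl.
rewrite /mxabs mulr_suml exchange_big /=.
apply: le_trans (ler_norm_sum _ _ _) _; apply: ler_sum => a _.
rewrite mulr_suml; apply: le_trans (ler_norm_sum _ _ _) _; apply: ler_sum => b _.
rewrite !normrM -mulrA mulrC -mulrA; apply: ler_wpM2l => //.
have hu := sqr_coord_le_sqnorm u a; have hv := sqr_coord_le_sqnorm v b.
rewrite -[u 0 a ^+ 2]real_normK ?num_real // in hu.
rewrite -[v 0 b ^+ 2]real_normK ?num_real // in hv.
have := normr_ge0 (u 0 a); have := normr_ge0 (v 0 b); nra.
Qed.

(* For t = 1/c the vector x - t x T^-1 gives
   0 <= x T x - 2 t |x|^2 + t^2 x T^-1 x <= x T x - t |x|^2. *)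
Lemma posdef_coercive s (T : 'M[R]_s) : T^T = T ->
  (forall x, x != 0 -> 0 < mxform x T x) ->
  exists2 c, 0 < c & forall x, sqnorm x <= c * mxform x T x.
Proof.
move=> TT pd.
have Tu : T \in unitmx by apply: posdef_unitmx.
set Ti := invmx T.
have TiT : Ti^T = Ti by rewrite /Ti trmx_inv TT.
have mulTTi : T *m Ti = 1%:M by rewrite /Ti mulmxV.
have mulTiT : Ti *m T = 1%:M by rewrite /Ti mulVmx.
pose c := 2 * mxabs Ti + 1.
have c0 : 0 < c by have := mxabs_ge0 Ti; rewrite /c => ?; lra.
exists c => // x; pose t := c^-1.
have t0 : 0 < t by rewrite invr_gt0.
have tc : t * c = 1 by rewrite mulVf // gt_eqF.
pose y := x - t *: (x *m Ti).
have y0 : 0 <= mxform y T y.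
  by have [->|yn] := eqVneq y 0; [rewrite mxform0l | exact/ltW/pd].
have Ey : mxform y T y = mxform x T x - 2 * t * sqnorm x + t ^+ 2 * mxform x Ti x.
  rewrite /y !mxformDl !mxformDr !mxformNl !mxformNr !mxformZl !mxformZr.
  by rewrite !mxform_mull !mxform_mulr TiT mulTTi mulTiT /sqnorm mul1mx; ring.
have B : mxform x Ti x <= c * sqnorm x.
  have := norm_mxform_le x Ti x; have := sqnorm_ge0 x; have := mxabs_ge0 Ti.
  by rewrite /c => h1 h2 /(le_trans (ler_norm _)) h3; nra.
have B2 : t ^+ 2 * mxform x Ti x <= t * sqnorm x.
  have -> : t * sqnorm x = t ^+ 2 * (c * sqnorm x).
    by rewrite expr2 mulrA -(mulrA t t c) tc mulr1.
  by apply: ler_wpM2l => //; rewrite sqr_ge0.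
have H : t * sqnorm x <= mxform x T x by lra.
by have := ler_wpM2l (ltW c0) H; rewrite mulrA (mulrC c t) tc mul1r.
Qed.

Lemma blockform_coercive m (F : nat -> nat -> 'M[R]_m) k :
  block_sym F -> blockform_posdef F k ->
  exists2 c, 0 < c & forall f, \sum_(0 <= i < k) sqnorm (f i) <= c * blockform F k f.
Proof.
move=> sF /mxblock_posdefP pd.
have TT : (\mxblock_(i < k, j < k) F i j)^T = \mxblock_(i < k, j < k) F i j.
  by rewrite tr_mxblock; apply: eq_mxblock => i j; rewrite -sF.
have [c c0 coer] := posdef_coercive TT pd.
by exists c => // f; rewrite -sqnorm_mxrow blockform_mxrow; exact: coer.
Qed.

Section Perturbation.
Variable m : nat.
Implicit Types (F G : nat -> nat -> 'M[R]_m) (f : nat -> 'rV[R]_m).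

Lemma blockformD F G k f :
  blockform (fun i j => F i j + G i j) k f = blockform F k f + blockform G k f.
Proof.
rewrite /blockform -big_split; apply: eq_bigr => i _; rewrite -big_split.
by apply: eq_bigr => j _; rewrite /mxform mulmxDr mulmxDl mxE.
Qed.

Lemma norm_blockform_le F k f :
  `|blockform F k f| <= (\sum_(0 <= i < k) \sum_(0 <= j < k) mxabs (F i j))
                        * (2 * \sum_(0 <= i < k) sqnorm (f i)).
Proof.
set E := \sum_(0 <= i < k) sqnorm (f i).
have fE i : (i < k)%N -> sqnorm (f i) <= E.
  move=> ik; rewrite /E big_mkord (bigD1 (Ordinal ik)) //= lerDl.
  by apply: sumr_ge0 => j _; exact: sqnorm_ge0.
rewrite mulr_suml; apply: le_trans (ler_norm_sum _ _ _) _.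
rewrite big_nat_cond [leRHS]big_nat_cond; apply: ler_sum => i /andP[/andP[_ ik] _].
rewrite mulr_suml; apply: le_trans (ler_norm_sum _ _ _) _.
rewrite big_nat_cond [leRHS]big_nat_cond; apply: ler_sum => j /andP[/andP[_ jk] _].
apply: le_trans (norm_mxform_le _ _ _) _; apply: ler_wpM2l; first exact: mxabs_ge0.
by have := fE i ik; have := fE j jk; lra.
Qed.

Lemma toep_reweight_posdef (Ga : nat -> 'M[R]_m) (w : nat -> R) k c e :
  0 < c -> (forall f, \sum_(0 <= i < k) sqnorm (f i) <= c * blockform (toep Ga) k f) ->
  (forall d, (d < k)%N -> `|w d - 1| <= e) ->
  2 * e * (\sum_(0 <= i < k) \sum_(0 <= j < k) mxabs (toep Ga i j)) * c < 1 ->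
  blockform_posdef (toep (fun d => w d *: Ga d)) k.
Proof.
move=> c0 coer we small f [i0 i0k fi0].
set A := \sum_(0 <= i < k) \sum_(0 <= j < k) mxabs (toep Ga i j) in small.
set E := \sum_(0 <= i < k) sqnorm (f i).
have E0 : 0 < E.
  rewrite /E big_mkord (bigD1 (Ordinal i0k)) //=.
  by apply: ltr_wpDr; [apply: sumr_ge0 => j _; exact: sqnorm_ge0 | exact: sqnorm_gt0].
pose D i j := (w (lag i j) - 1) *: toep Ga i j.
have eqQ : blockform (toep (fun d => w d *: Ga d)) k f
           = blockform (toep Ga) k f + blockform D k f.
  rewrite -blockformD /blockform; apply: eq_bigr => i _; apply: eq_bigr => j _.
  by rewrite /= toepZ /D scalerBl scale1r addrC subrK.
have bD : `|blockform D k f| <= e * A * (2 * E).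
  apply: le_trans (norm_blockform_le D k f) _; rewrite -/E.
  apply: ler_wpM2r; first by have := ltW E0; lra.
  rewrite /A mulr_sumr big_nat_cond [leRHS]big_nat_cond.
  apply: ler_sum => i /andP[/andP[_ ik] _].
  rewrite mulr_sumr big_nat_cond [leRHS]big_nat_cond.
  apply: ler_sum => j /andP[/andP[_ jk] _]; rewrite /D mxabsZ.
  by apply: ler_wpM2r; [exact: mxabs_ge0 | exact/we/lag_lt].
have nD := ler_norm (- blockform D k f); rewrite normrN in nD.
have cD : c * (- blockform D k f) <= c * (e * A * (2 * E)).
  by apply: ler_wpM2l; [exact: ltW | exact: le_trans nD bD].
have P : 0 < E * (1 - 2 * e * A * c) by apply: mulr_gt0 => //; lra.
have cE := coer f; rewrite -/E in cE.
by rewrite eqQ -(pmulr_rgt0 _ c0); nra.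
Qed.

End Perturbation.

Lemma sum_nat_delta (V : zmodType) N c (h : nat -> V) :
  \sum_(0 <= i < N) (if c == i then h i else 0) = if (c < N)%N then h c else 0.
Proof.
rewrite -big_mkcond (eq_bigl (fun i => i == c)) => [|i]; last by rewrite eq_sym.
by rewrite big_nat1_eq.
Qed.

Lemma sum_nat_delta2 (V : zmodType) N a b (T : nat -> nat -> V) :
  (a < N)%N -> (b < N)%N ->
  \sum_(0 <= i < N) \sum_(0 <= j < N) (if (a == i) && (b == j) then T i j else 0)
  = T a b.
Proof.
move=> aN bN.
transitivity (\sum_(0 <= i < N) (if a == i then T i b else 0)).
  apply: eq_bigr => i _; case: (a == i) => /=; first by rewrite sum_nat_delta bN.
  by rewrite big1.
by rewrite sum_nat_delta aN.
Qed.

Lemma sum_if_addn_lt (V : zmodType) (A : V) K d :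
  \sum_(0 <= q < K) (if (d + q < K)%N then A else 0) = A *+ (K - d).
Proof.
case: (leqP d K) => dK; last first.
  have -> : (K - d = 0)%N by apply/eqP; rewrite subn_eq0 ltnW.
  rewrite mulr0n big_nat_cond big1 // => q /andP[/andP[_ qK] _].
  by rewrite ifF //; apply/negbTE; rewrite -leqNgt (leq_trans (ltnW dK)) // leq_addr.
rewrite (big_cat_nat _ (n := (K - d)%N)) //= ?leq_subr //.
rewrite [X in _ + X]big_nat_cond [X in _ + X]big1; last first.
  move=> q /andP[/andP[qK _] _]; rewrite ifF //; apply/negbTE.
  by rewrite -leqNgt -leq_subLR.
rewrite addr0 big_nat_cond (eq_bigr (fun _ => A)); last first.
  by move=> q /andP[/andP[_ qK] _]; rewrite ifT // -ltn_subRL.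
by rewrite -big_nat_cond sumr_const_nat subn0.
Qed.

Section CirculantAverage.
Variable m : nat.
Implicit Types F : nat -> nat -> 'M[R]_m.

(* [circ_avg F K N] is [1/K] times the sum of the [N] cyclic translates, inside an
   [N x N] block matrix, of the [K x K] block matrix [F]. *)
Definition circ_block F K N i j : 'M[R]_m :=
  (K%:R)^-1 *: \sum_(0 <= s < N) \sum_(0 <= p < K) \sum_(0 <= q < K)
     (if ((s + p) %% N == i)%N && ((s + q) %% N == j)%N then F p q else 0).

Definition circ_avg F K N : 'M[R]_(\sum_(i < N) m, \sum_(j < N) m) :=
  \mxblock_(i < N, j < N) circ_block F K N i j.

Lemma mxblock_scale_sum3 N (c : R) (S P Q : nat)
    (B : nat -> nat -> nat -> nat -> nat -> 'M[R]_m) :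
  \mxblock_(i < N, j < N)
     (c *: \sum_(0 <= s < S) \sum_(0 <= p < P) \sum_(0 <= q < Q) B s p q i j)
  = c *: \sum_(0 <= s < S) \sum_(0 <= p < P) \sum_(0 <= q < Q)
        \mxblock_(i < N, j < N) B s p q i j.
Proof.
apply/matrixP => a b; rewrite !mxE summxE; congr (_ * _).
rewrite summxE; apply: eq_bigr => s _; rewrite !summxE; apply: eq_bigr => p _.
by rewrite !summxE; apply: eq_bigr => q _; rewrite !mxE.
Qed.

Lemma mxform_circ_avg F K N (x : 'rV[R]_(\sum_(i < N) m)) : (0 < N)%N ->
  mxform x (circ_avg F K N) x =
  (K%:R)^-1 * \sum_(0 <= s < N) blockform F K (fun p => rowblock x ((s + p) %% N)%N).
Proof.
move=> N0; rewrite /circ_avg /circ_block.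
rewrite (@mxblock_scale_sum3 N _ N K K (fun s p q i j =>
  if ((s + p) %% N == i)%N && ((s + q) %% N == j)%N then F p q else 0)).
rewrite mxformZ; congr (_ * _).
rewrite mxform_sum; apply: eq_bigr => s _; rewrite /blockform mxform_sum.
apply: eq_bigr => p _; rewrite mxform_sum; apply: eq_bigr => q _.
rewrite (mxform_mxblock x (fun i j =>
  if ((s + p) %% N == i)%N && ((s + q) %% N == j)%N then F p q else 0)) /blockform.
rewrite (eq_bigr (fun i => \sum_(0 <= j < N)
   if ((s + p) %% N == i)%N && ((s + q) %% N == j)%N
   then mxform (rowblock x i) (F p q) (rowblock x j) else 0)).
  by rewrite sum_nat_delta2 // ltn_pmod.
by move=> i _; apply: eq_bigr => j _; case: ifP => _ //; exact: mxform0.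
Qed.

Lemma circ_avg_posdef F K N : (0 < K)%N -> (0 < N)%N -> blockform_posdef F K ->
  forall x, x != 0 -> 0 < mxform x (circ_avg F K N) x.
Proof.
move=> K0 N0 pd x x0; rewrite mxform_circ_avg //.
apply: mulr_gt0; first by rewrite invr_gt0 ltr0n.
have [i0 i0N xi0] := rowblock_neq0 x0.
rewrite big_mkord (bigD1 (Ordinal i0N)) //=; apply: ltr_wpDr.
  by apply: sumr_ge0 => s _; exact: blockform_ge0.
by apply: pd; exists 0%N => //; rewrite addn0 modn_small.
Qed.

Lemma circ_avg_tr F K N : block_sym F -> (circ_avg F K N)^T = circ_avg F K N.
Proof.
move=> sF; rewrite /circ_avg tr_mxblock; apply: eq_mxblock => i j.
rewrite /circ_block linearZ /= raddf_sum; congr (_ *: _).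
apply: eq_bigr => s _; rewrite raddf_sum exchange_big_nat /=.
apply: eq_bigr => p _; rewrite raddf_sum; apply: eq_bigr => q _.
by rewrite andbC; case: ifP => _; [rewrite [RHS]sF | exact: raddf0].
Qed.

Lemma modnD_eq_sub N s p i : (s < N)%N -> (i < N)%N -> (p <= N)%N ->
  ((s + p) %% N == i)%N = (s == (i + N - p) %% N)%N.
Proof.
move=> sN iN pN.
rewrite -{1}(modn_small iN) -(modnDr i N).
have -> : (i + N = (i + N - p) + p)%N by rewrite subnK // (leq_trans pN) // leq_addl.
by rewrite eqn_modDr modn_small // addnK.
Qed.

Lemma modn_subD_eq N i j p q : (j < N)%N -> (p <= N)%N ->
  (((i + N - p) %% N + q) %% N == j)%N = (i + N + q == j + p %[mod N])%N.
Proof.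
move=> jN pN.
rewrite -{1}(modn_small jN) modnDml -(eqn_modDr p).
by rewrite addnAC subnK // (leq_trans pN) // leq_addl.
Qed.

Lemma circ_block_collapse F K N i j : (i < N)%N -> (j < N)%N -> (K <= N)%N ->
  circ_block F K N i j = (K%:R)^-1 *: \sum_(0 <= p < K) \sum_(0 <= q < K)
     (if (i + N + q == j + p %[mod N])%N then F p q else 0).
Proof.
move=> iN jN KN; have N0 : (0 < N)%N := leq_ltn_trans (leq0n i) iN.
rewrite /circ_block; congr (_ *: _).
rewrite exchange_big_nat /=; apply: eq_big_nat => p /andP[_ pK].
rewrite exchange_big_nat /=; apply: eq_bigr => q _.
have pN : (p <= N)%N by apply: ltnW; apply: leq_trans KN.
rewrite (eq_big_nat _ _ (F2 := fun s => if ((i + N - p) %% N == s)%N then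
     (if ((s + q) %% N == j)%N then F p q else 0) else 0)); last first.
  move=> s /andP[_ sN]; rewrite modnD_eq_sub // eq_sym.
  by case: ((i + N - p) %% N == s)%N.
by rewrite sum_nat_delta ltn_pmod // modn_subD_eq.
Qed.

Lemma eq_circ_block F K N (i j i' j' : 'I_N) : (K <= N)%N ->
  ((i + N - j) %% N = (i' + N - j') %% N)%N ->
  circ_block F K N i j = circ_block F K N i' j'.
Proof.
move=> KN eqij; rewrite !circ_block_collapse //.
congr (_ *: _); apply: eq_bigr => p _; apply: eq_bigr => q _.
have key (a b : 'I_N) :
    (a + N + q == b + p %[mod N])%N = ((a + N - b) %% N + q == p %[mod N])%N.
  have -> : (a + N + q = (a + N - b) + q + b)%N.
    by rewrite [RHS]addnAC subnK // (leq_trans (ltnW (ltn_ord b))) // leq_addl.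
  by rewrite (addnC b p) eqn_modDr modnDml.
by rewrite !key eqij.
Qed.

Lemma circ_block_corner (Ga : nat -> 'M[R]_m) K N i j :
  (0 < K)%N -> (i + K <= N)%N -> (j + K <= N)%N ->
  circ_block (toep Ga) K N i j = ((K%:R)^-1 * (K - lag i j)%:R) *: toep Ga i j.
Proof.
move=> K0 iK jK; have KN : (K <= N)%N := leq_trans (leq_addl i K) iK.
have iN : (i < N)%N by apply: leq_trans iK; rewrite -addn1 leq_add2l.
have jN : (j < N)%N by apply: leq_trans jK; rewrite -addn1 leq_add2l.
rewrite -scalerA circ_block_collapse //; congr (_ *: _).
have C p q : (p < K)%N -> (q < K)%N ->
    (i + N + q == j + p %[mod N])%N = (i + q == j + p)%N.
  move=> pK qK; rewrite addnAC modnDr modn_small ?modn_small //.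
    by apply: leq_trans jK; rewrite ltn_add2l.
  by apply: leq_trans iK; rewrite ltn_add2l.
rewrite (eq_big_nat _ _ (F2 := fun p => \sum_(0 <= q < K)
    (if (i + q == j + p)%N then toep Ga p q else 0))); last first.
  by move=> p /andP[_ pK]; apply: eq_big_nat => q /andP[_ qK]; rewrite C.
rewrite /lag; case: (leqP j i) => ji.
  set d := (i - j)%N; have Ei : i = (j + d)%N by rewrite /d subnKC.
  rewrite exchange_big_nat /=.
  rewrite (eq_bigr (fun q => if (d + q < K)%N then toep Ga i j else 0)).
    by rewrite sum_if_addn_lt scaler_nat.
  move=> q _; rewrite (eq_bigr (fun p => if (d + q == p)%N then toep Ga p q else 0)).
    by rewrite sum_nat_delta; case: ifP => // _; rewrite /toep leq_addl addnK ji.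
  by move=> p _; rewrite {1}Ei -addnA eqn_add2l.
set e := (j - i)%N; have Ej : j = (i + e)%N by rewrite /e subnKC // ltnW.
rewrite (eq_bigr (fun p => if (e + p < K)%N then toep Ga i j else 0)).
  by rewrite sum_if_addn_lt scaler_nat.
move=> p _; rewrite (eq_bigr (fun q => if (e + p == q)%N then toep Ga p q else 0)); last first.
  by move=> q _; rewrite {1}Ej -addnA eqn_add2l eq_sym.
rewrite sum_nat_delta; case: ifP => // _.
have e0 : (0 < e)%N by rewrite /e subn_gt0.
rewrite /toep ifF; last by apply/negbTE; rewrite -ltnNge addnC -addn1 leq_add2l.
by rewrite ifF ?addnK //; apply/negbTE; rewrite -ltnNge.
Qed.

End CirculantAverage.
End BilinearForms.

Lemma weight_dev_le (R : realFieldType) (n M d : nat) : (d <= n)%N ->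
  `|((n + M.+1)%:R / (n + M.+1 - d)%:R - 1 : R)| <= n%:R / M.+1%:R.
Proof.
move=> dn; set K := (n + M.+1)%N.
have KdM : (M.+1 <= K - d)%N.
  by rewrite /K leq_subRL ?addnA ?leq_add2r // (leq_trans dn) // leq_addr.
have a0 : (0 : R) < (K - d)%:R by rewrite ltr0n (leq_trans _ KdM).
have EK : (K%:R : R) = (K - d)%:R + d%:R.
  by rewrite -natrD subnK // (leq_trans dn) // /K leq_addr.
have -> : (K%:R / (K - d)%:R - 1 : R) = d%:R / (K - d)%:R.
  by rewrite EK mulrDl divff ?gt_eqF // addrC addKr.
rewrite ger0_norm ?divr_ge0 // ler_pdivrMr //.
have M0 : (0 : R) < M.+1%:R by rewrite ltr0n.
have H1 : M.+1%:R <= (K - d)%:R :> R by rewrite ler_nat.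
have H2 : d%:R <= n%:R :> R by rewrite ler_nat.
have H3 : 0 <= n%:R / M.+1%:R :> R by rewrite divr_ge0.
apply: le_trans H2 _; apply: le_trans (ler_wpM2l H3 H1).
by rewrite mulfVK ?gt_eqF.
Qed.

Lemma toep_weighted_extension (R : archiRealFieldType) m n (Sg : nat -> 'M[R]_m) :
  (Sg 0)^T = Sg 0 -> blockform_posdef (toep Sg) n.+1 ->
  exists K (Ga : nat -> 'M[R]_m),
    [/\ (n < K)%N, (Ga 0)^T = Ga 0, blockform_posdef (toep Ga) K
      & forall d, (d <= n)%N -> ((K%:R)^-1 * (K - d)%:R) *: Ga d = Sg d].
Proof.
move=> sym0 pd0.
have [c c0 coer] := blockform_coercive (toep_sym sym0) pd0.
set A := \sum_(0 <= i < n.+1) \sum_(0 <= j < n.+1) mxabs (toep Sg i j) in coer *.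
have A0 : 0 <= A by apply: sumr_ge0 => i _; apply: sumr_ge0 => j _; exact: mxabs_ge0.
pose M := Num.Def.archi_bound (2 * n%:R * A * c).
have HM : 2 * n%:R * A * c < M%:R.
  by apply: archi_boundP; rewrite !mulr_ge0 // ltW.
pose K := (n + M.+1)%N.
pose w d : R := K%:R / (K - d)%:R.
pose e : R := n%:R / M.+1%:R.
have small : 2 * e * A * c < 1.
  have M0 : (0 : R) < M.+1%:R by rewrite ltr0n.
  have -> : 2 * e * A * c = 2 * n%:R * A * c / M.+1%:R by rewrite /e; ring.
  by rewrite ltr_pdivrMr // mul1r -addn1 natrD; move: HM; lra.
have pdw : blockform_posdef (toep (fun d => w d *: Sg d)) n.+1.
  by apply: toep_reweight_posdef c0 coer _ small => d dn; exact: weight_dev_le.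
have symw : (w 0 *: Sg 0)^T = w 0 *: Sg 0 by rewrite linearZ /= sym0.
have [Ga [agree pdG]] := toep_extend symw pdw (leq_addr M n).
rewrite -addnS in pdG.
have nK : (n < K)%N by rewrite /K addnS ltnS leq_addr.
exists K, Ga; split => //; first by rewrite agree // linearZ /= sym0.
move=> d dn; rewrite agree // scalerA.
have Kd : (K - d)%:R != 0 :> R by rewrite pnatr_eq0 subn_eq0 -ltnNge (leq_ltn_trans dn).
have K0 : K%:R != 0 :> R by rewrite pnatr_eq0 /K addnS.
have -> : (K%:R)^-1 * (K - d)%:R * w d = 1 by rewrite /w; field; rewrite Kd K0.
by rewrite scale1r.
Qed.

Theorem theorem5 (R : realType) (m n : nat) (Sigma : 'I_n.+1 -> 'M[R]_m) :
  (0 < m)%N -> (0 < n)%N ->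
  (toeplitzT Sigma)^T = toeplitzT Sigma ->
  posdef (toeplitzT Sigma) ->
  exists Nbar : nat, forall N : nat, (Nbar <= N)%N ->
    (n < N)%N /\
    exists S : 'M[R]_(\sum_(i < N) m, \sum_(j < N) m),
      block_circulant S /\ S^T = S /\ posdef S /\
      (forall i j : 'I_N, (i <= n)%N -> (j <= n)%N ->
         submxblock S i j = toep_block Sigma i j).
Proof.
move=> _ _ Tsym Tpd; pose Sg d := Sigma (inord d).
have TE : toeplitzT Sigma = \mxblock_(i < n.+1, j < n.+1) toep Sg i j by [].
have sym0 : (Sg 0)^T = Sg 0.
  by have := congr1 (fun T => submxblock T ord0 ord0) Tsym; rewrite TE tr_mxblock !mxblockK.
have pd0 : blockform_posdef (toep Sg) n.+1 by apply/mxblock_posdefP; rewrite -TE.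
have [K [Ga [nK symG pdG weights]]] := toep_weighted_extension sym0 pd0.
exists (K + n.+1)%N => N KnN; have KN : (K <= N)%N := leq_trans (leq_addr _ K) KnN.
have K0 : (0 < K)%N := leq_ltn_trans (leq0n n) nK.
split; first exact: leq_trans nK KN.
exists (circ_avg (toep Ga) K N); split.
  by move=> i j i' j' eqij; rewrite !mxblockK; exact: eq_circ_block.
split; first exact/circ_avg_tr/toep_sym.
split; first by apply: circ_avg_posdef => //; exact: leq_trans K0 KN.
move=> i j ilen jlen.
have bound k : (k <= n)%N -> (k + K <= N)%N.
  by move=> kn; apply: leq_trans KnN; rewrite addnC leq_add2l (leq_trans kn).
have -> : toep_block Sigma i j = toep Sg i j by [].
rewrite mxblockK circ_block_corner ?bound //.
rewrite -(toepZ Ga (fun d => (K%:R)^-1 * (K - d)%:R)).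
by apply: eq_toep; exact/weights/lag_le.
Qed.
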